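(* Let $m_1,m_2,m_3\ge 2$ be integers and let $P^{\mathbf{i}}\in\mathbb{R}^3$ be points indexed by multi-indices $\mathbf{i}=(i_1,i_2,i_3)$ with $i_j\in\{1,\dots,m_j\}$. For $k\in\{1,2,3\}$ let $e_k$ be the $k$-th unit multi-index, $I(k)=\{\mathbf{i}: i_j\in\{1,\dots,m_j\}\text{ for }j\ne k,\ i_k\in\{1,\dots,m_k-1\}\}$, $\Delta_k^{\mathbf{i}}=P^{\mathbf{i}+e_k}-P^{\mathbf{i}}$ for $\mathbf{i}\in I(k)$, and $C_k=\mathrm{coni}\{\Delta_k^{\mathbf{i}}:\mathbf{i}\in I(k)\}$. Define $H_1(x)=x_1-x_2-x_3$, $H_2(x)=x_1-x_2+x_3$, $H_3(x)=x_1+x_2-x_3$, $H_4(x)=x_1+x_2+x_3$ and $C_1^0=\{x: H_1(x)>0,H_2(x)>0,H_3(x)>0,H_4(x)>0\}\cup\{0\}$, $C_2^0=\{x: H_1(x)<0,H_2(x)<0,H_3(x)>0,H_4(x)>0\}\cup\{0\}$, $C_3^0=\{x: H_1(x)<0,H_2(x)>0,H_3(x)<0,H_4(x)>0\}\cup\{0\}$. If $\mathrm{conv}\{\Delta_k^{\mathbf{i}}:\mathbf{i}\in I(k)\}\subset C_k^0$ for $k=1,2,3$, then $C_1,C_2,C_3$ are cotransverse.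
   Context: The conical hull of $X\subseteq\mathbb{R}^3$ is $\mathrm{coni}\,X=\{\sum_{i=1}^n\lambda_i x_i: x_i\in X,\ n\in\mathbb{N},\ \lambda_i\ge0\}$ and the convex hull is $\mathrm{conv}\,X=\{\sum_{i=1}^n\lambda_i x_i: x_i\in X,\ n\in\mathbb{N},\ \lambda_i\ge0,\ \sum_i\lambda_i=1\}$; the convex hull of several cones means the convex hull of their union. A subset $X$ is a cone if $x\in X,\lambda\ge0\Rightarrow\lambda x\in X$. Two cones $C,D$ are transverse if $C\cup(-C)$ and $D\cup(-D)$ intersect only in $\{0\}$. Three cones $C_1,C_2,C_3$ are cotransverse if the origin is a vertex of the convex hull of $C_1,C_2,C_3$ and, for every $\{i,j,k\}=\{1,2,3\}$, $C_i$ and the convex hull of $C_j,C_k$ are transverse. *)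

From HB Require Import structures.
From mathcomp Require Import all_boot all_order all_algebra.
From mathcomp Require Import reals.
Set Implicit Arguments. Unset Strict Implicit. Unset Printing Implicit Defensive.
Import Order.TTheory GRing.Theory Num.Theory.
Local Open Scope ring_scope.

Section Defs.
Variable R : realType.
Notation vec := 'rV[R]_3.

Definition c1 : 'I_3 := @Ordinal 3 0 isT.
Definition c2 : 'I_3 := @Ordinal 3 1 isT.
Definition c3 : 'I_3 := @Ordinal 3 2 isT.
Definition x1 (x : vec) := x ord0 c1.
Definition x2 (x : vec) := x ord0 c2.
Definition x3 (x : vec) := x ord0 c3.

Definition coni (X : vec -> Prop) : vec -> Prop := fun v =>
  exists (n : nat) (x : 'I_n -> vec) (l : 'I_n -> R),
    (forall i, X (x i)) /\ (forall i, 0 <= l i) /\ v = \sum_(i < n) l i *: x i.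

Definition conv (X : vec -> Prop) : vec -> Prop := fun v =>
  exists (n : nat) (x : 'I_n -> vec) (l : 'I_n -> R),
    (forall i, X (x i)) /\ (forall i, 0 <= l i) /\ \sum_(i < n) l i = 1 /\
    v = \sum_(i < n) l i *: x i.

Definition setU2 (X Y : vec -> Prop) : vec -> Prop := fun v => X v \/ Y v.
Definition setU3 (X Y Z : vec -> Prop) : vec -> Prop := fun v => X v \/ Y v \/ Z v.

Definition set_sub (X Y : vec -> Prop) := forall v, X v -> Y v.

Definition transverse (C D : vec -> Prop) :=
  forall v, (C v \/ C (- v)) -> (D v \/ D (- v)) -> v = 0.

Definition is_vertex (K : vec -> Prop) (x : vec) :=
  K x /\ forall (y z : vec) (t : R), K y -> K z -> 0 < t < 1 ->
    x = t *: y + (1 - t) *: z -> y = x /\ z = x.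

Definition cotransverse (C1 C2 C3 : vec -> Prop) :=
  is_vertex (conv (setU3 C1 C2 C3)) 0 /\
  transverse C1 (conv (setU2 C2 C3)) /\
  transverse C2 (conv (setU2 C1 C3)) /\
  transverse C3 (conv (setU2 C1 C2)).

Definition H1 (x : vec) := x1 x - x2 x - x3 x.
Definition H2 (x : vec) := x1 x - x2 x + x3 x.
Definition H3 (x : vec) := x1 x + x2 x - x3 x.
Definition H4 (x : vec) := x1 x + x2 x + x3 x.

Definition C1_0 : vec -> Prop := fun x =>
  (0 < H1 x /\ 0 < H2 x /\ 0 < H3 x /\ 0 < H4 x) \/ x = 0.
Definition C2_0 : vec -> Prop := fun x =>
  (H1 x < 0 /\ H2 x < 0 /\ 0 < H3 x /\ 0 < H4 x) \/ x = 0.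
Definition C3_0 : vec -> Prop := fun x =>
  (H1 x < 0 /\ 0 < H2 x /\ H3 x < 0 /\ 0 < H4 x) \/ x = 0.

(* Difference vectors Delta_k^i, i in I(k); multi-indices are 0-based:
   i_j ranges over 'I_m_j. *)
Definition Delta1 (m1 m2 m3 : nat) (P : 'I_m1 -> 'I_m2 -> 'I_m3 -> vec)
  : vec -> Prop := fun v =>
  exists (i1 j1 : 'I_m1) (i2 : 'I_m2) (i3 : 'I_m3),
    val j1 = (val i1).+1 /\ v = P j1 i2 i3 - P i1 i2 i3.
Definition Delta2 (m1 m2 m3 : nat) (P : 'I_m1 -> 'I_m2 -> 'I_m3 -> vec)
  : vec -> Prop := fun v =>
  exists (i1 : 'I_m1) (i2 j2 : 'I_m2) (i3 : 'I_m3),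
    val j2 = (val i2).+1 /\ v = P i1 j2 i3 - P i1 i2 i3.
Definition Delta3 (m1 m2 m3 : nat) (P : 'I_m1 -> 'I_m2 -> 'I_m3 -> vec)
  : vec -> Prop := fun v =>
  exists (i1 : 'I_m1) (i2 : 'I_m2) (i3 j3 : 'I_m3),
    val j3 = (val i3).+1 /\ v = P i1 i2 j3 - P i1 i2 i3.

End Defs.

From HB Require Import structures.
From mathcomp Require Import all_boot all_order all_algebra.
From mathcomp Require Import reals.
From mathcomp Require Import ring lra.
Set Implicit Arguments. Unset Strict Implicit. Unset Printing Implicit Defensive.
Import Order.TTheory GRing.Theory Num.Theory.
Local Open Scope ring_scope.

(** On each C_k^0 the functionals H1, ..., H4 have fixed strict signs, and a
   linear functional that is strictly positive on the nonzero generators of a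
   cone stays so on the nonzero points of its conical and convex hulls.  H4 is
   positive on all three cones C_k: this makes 0 a vertex of the convex hull of
   their union and forbids a nonzero v and -v from lying in two of them.  The
   functional H_k has one strict sign on C_k and the opposite one on the other
   two cones, so it separates C_k from their convex hull. *)

Section PositiveFunctionals.
Variable R : realType.
Notation vec := 'rV[R]_3.

Definition positive_on (f : vec -> R) (S : vec -> Prop) :=
  forall x, S x -> x != 0 -> 0 < f x.

Lemma positive_on_sub f (S T : vec -> Prop) :
  set_sub S T -> positive_on f T -> positive_on f S.
Proof. by move=> ST fT x /ST; apply: fT. Qed.

Lemma positive_on_setU2 f (A B : vec -> Prop) :
  positive_on f A -> positive_on f B -> positive_on f (setU2 A B).
Proof. by move=> fA fB x [/fA|/fB]. Qed.

Lemma positive_on_setU3 f (A B C : vec -> Prop) :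
  positive_on f A -> positive_on f B -> positive_on f C ->
  positive_on f (setU3 A B C).
Proof. by move=> fA fB fC x [/fA|[/fB|/fC]]. Qed.

Lemma sub_conv (S : vec -> Prop) : set_sub S (conv S).
Proof.
move=> v Sv; exists 1%N, (fun=> v), (fun=> 1).
by rewrite !big_ord1 scale1r.
Qed.

Lemma conv_sub_coni (S : vec -> Prop) : set_sub (conv S) (coni S).
Proof. by move=> v [n [x [l [Sx [l_ge0 [_ ->]]]]]]; exists n, x, l. Qed.

Lemma coni0 (S : vec -> Prop) : coni S 0.
Proof. by exists 0%N, (fun=> 0), (fun=> 0); rewrite big_ord0; do !split; case. Qed.

Lemma positive_on_coni (f : {scalar vec}) S :
  positive_on f S -> positive_on f (coni S).
Proof.
move=> fS _ [n [x [l [Sx [l_ge0 ->]]]]] v_neq0.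
have term_ge0 i : 0 <= l i * f (x i).
  have [->|/(fS _ (Sx i))/ltW] := eqVneq (x i) 0; first by rewrite linear0 mulr0.
  exact: mulr_ge0.
rewrite linear_sum; under eq_bigr do rewrite linearZ /=.
rewrite lt_def sumr_ge0 ?andbT //; apply/eqP => sum0.
move/eqP: v_neq0; apply; apply: big1 => i _.
have /eqP := psumr_eq0P (fun i _ => term_ge0 i) sum0 (i := i) isT.
rewrite mulf_eq0 => /orP[/eqP->|/eqP fx0]; first by rewrite scale0r.
have [->|/(fS _ (Sx i))] := eqVneq (x i) 0; first by rewrite scaler0.
by rewrite fx0 ltxx.
Qed.

Lemma positive_on_conv (f : {scalar vec}) S :
  positive_on f S -> positive_on f (conv S).
Proof. by move=> /positive_on_coni; apply: positive_on_sub (@conv_sub_coni S). Qed.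

Lemma positive_on_coni_of_conv_sub (f : {scalar vec}) S T :
  set_sub (conv S) T -> positive_on f T -> positive_on f (coni S).
Proof.
move=> ST fT; apply: positive_on_coni; apply: positive_on_sub fT.
by move=> v /sub_conv /ST.
Qed.

Lemma positive_on_reflect (f : {scalar vec}) S :
  positive_on f S -> positive_on (\- f) (fun x => S (- x)).
Proof. by move=> fS x /fS; rewrite oppr_eq0 linearN /= oppr_gt0. Qed.

Lemma positive_on_opp_disjoint (f : vec -> R) A B x :
  positive_on f A -> positive_on (\- f) B -> A x -> B x -> x = 0.
Proof.
move=> fA fB Ax Bx; have [//|x_neq0] := eqVneq x 0.
exfalso; have := fA _ Ax x_neq0; have /= := fB _ Bx x_neq0; lra.
Qed.

Lemma transverse_sym (C D : vec -> Prop) : transverse C D -> transverse D C.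
Proof. by move=> CD v Dv Cv; apply: CD. Qed.

Lemma transverse_of_separation (f g : {scalar vec}) C D :
  positive_on f C -> positive_on (\- f) D ->
  positive_on g C -> positive_on g D -> transverse C D.
Proof.
move=> fC fD gC gD v [Cv|Cv] [Dv|Dv].
- exact: positive_on_opp_disjoint fC fD Cv Dv.
- by apply: positive_on_opp_disjoint gC (positive_on_reflect gD) Cv _.
- by apply: positive_on_opp_disjoint gD (positive_on_reflect gC) Dv _.
- by apply/oppr_inj; rewrite oppr0; apply: positive_on_opp_disjoint fC fD Cv Dv.
Qed.

Lemma is_vertex0 (g : {scalar vec}) K : positive_on g K -> K 0 -> is_vertex K 0.
Proof.
move=> gK K0; split=> // y z t Ky Kz /andP[t_gt0 t_lt1] yz0.
have := congr1 g yz0; rewrite linear0 linearD !linearZ /= => g_yz0.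
have [y0|/(gK _ Ky) gy] := eqVneq y 0; have [z0|/(gK _ Kz) gz] := eqVneq z 0.
- by [].
- by exfalso; move: g_yz0; rewrite y0 linear0; nra.
- by exfalso; move: g_yz0; rewrite z0 linear0; nra.
- by exfalso; nra.
Qed.

Section Cotransverse.
Variables (C1 C2 C3 : vec -> Prop) (h1 h2 h3 g : {scalar vec}).
Hypothesis C1_has0 : C1 0.
Hypotheses (g1 : positive_on g C1) (g2 : positive_on g C2) (g3 : positive_on g C3).
Hypotheses (h11 : positive_on h1 C1) (h12 : positive_on (\- h1) C2)
  (h13 : positive_on (\- h1) C3).
Hypotheses (h21 : positive_on h2 C1) (h22 : positive_on (\- h2) C2)
  (h23 : positive_on h2 C3).
Hypotheses (h31 : positive_on h3 C1) (h32 : positive_on h3 C2)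
  (h33 : positive_on (\- h3) C3).

Lemma cotransverse_of_separating_functionals : cotransverse C1 C2 C3.
Proof.
split; [|split; [|split]].
- apply: (is_vertex0 (g := g)); last by apply: sub_conv; left.
  by apply/positive_on_conv/positive_on_setU3.
- apply: (transverse_of_separation (f := h1) (g := g)) => //;
    by apply/positive_on_conv/positive_on_setU2.
- apply/transverse_sym/(transverse_of_separation (f := h2) (g := g)) => //;
    by apply/positive_on_conv/positive_on_setU2.
- apply/transverse_sym/(transverse_of_separation (f := h3) (g := g)) => //;
    by apply/positive_on_conv/positive_on_setU2.
Qed.

End Cotransverse.

Lemma H1_is_linear : linear_for *%R (@H1 R).
Proof. by move=> a u v; rewrite /H1 /x1 /x2 /x3 !mxE; ring. Qed.
HB.instance Definition _ := GRing.isLinear.Build R vec R *%R (@H1 R) H1_is_linear.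

Lemma H2_is_linear : linear_for *%R (@H2 R).
Proof. by move=> a u v; rewrite /H2 /x1 /x2 /x3 !mxE; ring. Qed.
HB.instance Definition _ := GRing.isLinear.Build R vec R *%R (@H2 R) H2_is_linear.

Lemma H3_is_linear : linear_for *%R (@H3 R).
Proof. by move=> a u v; rewrite /H3 /x1 /x2 /x3 !mxE; ring. Qed.
HB.instance Definition _ := GRing.isLinear.Build R vec R *%R (@H3 R) H3_is_linear.

Lemma H4_is_linear : linear_for *%R (@H4 R).
Proof. by move=> a u v; rewrite /H4 /x1 /x2 /x3 !mxE; ring. Qed.
HB.instance Definition _ := GRing.isLinear.Build R vec R *%R (@H4 R) H4_is_linear.

Lemma positive_on_C1_0 :
  [/\ positive_on (@H1 R) (@C1_0 R), positive_on (@H2 R) (@C1_0 R),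
      positive_on (@H3 R) (@C1_0 R) & positive_on (@H4 R) (@C1_0 R)].
Proof. by split=> x [[? [? [? ?]]]|->]; rewrite ?eqxx. Qed.

Lemma positive_on_C2_0 :
  [/\ positive_on (\- @H1 R) (@C2_0 R), positive_on (\- @H2 R) (@C2_0 R),
      positive_on (@H3 R) (@C2_0 R) & positive_on (@H4 R) (@C2_0 R)].
Proof. by split=> x [[? [? [? ?]]]|->]; rewrite ?eqxx //= oppr_gt0. Qed.

Lemma positive_on_C3_0 :
  [/\ positive_on (\- @H1 R) (@C3_0 R), positive_on (@H2 R) (@C3_0 R),
      positive_on (\- @H3 R) (@C3_0 R) & positive_on (@H4 R) (@C3_0 R)].
Proof. by split=> x [[? [? [? ?]]]|->]; rewrite ?eqxx //= oppr_gt0. Qed.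

End PositiveFunctionals.

Theorem lemma2 (R : realType) (m1 m2 m3 : nat)
  (hm1 : (2 <= m1)%N) (hm2 : (2 <= m2)%N) (hm3 : (2 <= m3)%N)
  (P : 'I_m1 -> 'I_m2 -> 'I_m3 -> 'rV[R]_3) :
  set_sub (conv (Delta1 P)) (@C1_0 R) ->
  set_sub (conv (Delta2 P)) (@C2_0 R) ->
  set_sub (conv (Delta3 P)) (@C3_0 R) ->
  cotransverse (coni (Delta1 P)) (coni (Delta2 P)) (coni (Delta3 P)).
Proof.
(* Only the generators Delta_k^i need to lie in C_k^0. *)
move=> sub1 sub2 sub3.
have [p11 p12 p13 p14] := positive_on_C1_0 R.
have [p21 p22 p23 p24] := positive_on_C2_0 R.
have [p31 p32 p33 p34] := positive_on_C3_0 R.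
apply: (cotransverse_of_separating_functionals
          (h1 := @H1 R) (h2 := @H2 R) (h3 := @H3 R) (g := @H4 R));
  first exact: coni0.
all: by apply: positive_on_coni_of_conv_sub; eassumption.
Qed.
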